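(* Let $F:[0,1]^d\to[0,1]^d$ be a discrete time regulatory network with parameters $K,T,s,a$ as in the context, let $\Lambda$ be its limit set and $\Delta$ its discontinuity set. If $\operatorname{dist}(\Lambda,\Delta)>0$, then $\Lambda$ is finite.
   Context: $K\in[0,1]^{d\times d}$ with $\sum_iK_{i,j}=1$ for each $j$; $s\in\{-1,0,1\}^{d\times d}$ and $T\in[0,1]^{d\times d}$ with $s_{i,j}=0$ iff $K_{i,j}=0$ and $T_{i,j}=0$ iff $K_{i,j}=0$; $a\in[0,1]$; $H(x)=0$ for $x\le0$, $H(x)=1$ for $x>0$; $F(x)_j=ax_j+(1-a)\sum_iK_{i,j}H(s_{i,j}(x_i-T_{i,j}))$. The limit set $\Lambda$ is the set of $x\in[0,1]^d$ for which there exist $y\in[0,1]^d$ and times $t_1<t_2<\cdots$ with $\lim_{n\to\infty}F^{t_n}(y)=x$. The discontinuity set is $\Delta=\{x\in[0,1]^d:\ \exists\, i,k\in\{1,\dots,d\}\text{ with } x_i=T_{i,k}\}$. *)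

From HB Require Import structures.
From mathcomp Require Import all_boot all_order all_algebra.
From mathcomp Require Import all_classical all_reals all_analysis.
Set Implicit Arguments. Unset Strict Implicit. Unset Printing Implicit Defensive.
Import Order.TTheory GRing.Theory Num.Theory.
Import numFieldNormedType.Exports.
Local Open Scope classical_set_scope.
Local Open Scope ring_scope.

Definition heav {R : realType} (x : R) : R := if 0 < x then 1 else 0.

Definition regnet {R : realType} {d : nat} (a : R) (K : 'I_d -> 'I_d -> R)
    (s : 'I_d -> 'I_d -> int) (T : 'I_d -> 'I_d -> R) (x : 'I_d -> R) : 'I_d -> R :=
  fun j => a * x j + (1 - a) * \sum_(i < d) K i j * heav ((s i j)%:~R * (x i - T i j)).

Definition unit_cube {R : realType} {d : nat} : set ('I_d -> R) :=
  [set x | forall i, 0 <= x i <= 1].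

Definition limit_set {R : realType} {d : nat} (F : ('I_d -> R) -> ('I_d -> R))
  : set ('I_d -> R) :=
  [set x | unit_cube x /\ exists y, unit_cube y /\
     exists t : nat -> nat, (forall n, (t n < t n.+1)%N) /\
       (forall i : 'I_d, (fun n => iter (t n) F y i) @ \oo --> x i)].

Definition disc_set {R : realType} {d : nat} (T : 'I_d -> 'I_d -> R) : set ('I_d -> R) :=
  [set x | unit_cube x /\ exists i k, x i = T i k].

(* dist(A, B) > 0, using the sup-norm on R^d (equivalent to the Euclidean one). *)
Definition dist_pos {R : realType} {d : nat} (A B : set ('I_d -> R)) : Prop :=
  exists2 eps : R, 0 < eps &
    forall x y, A x -> B y -> exists i : 'I_d, eps <= `|x i - y i|.

From mathcomp Require Import all_boot all_order all_algebra.
From mathcomp Require Import all_classical all_reals all_analysis.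
From mathcomp Require Import ring lra zify.

(* Let e = dist(Λ, Δ) > 0.  Every limit point is e-far from every threshold, so
   within distance e of a limit point x the Heaviside terms do not change and
   F u = F x + a (u - x).  Since Λ is F-invariant, this propagates along orbits:
   F^k u - F^k x = a^k (u - x).  A limit point is recurrent, and comparing
   F^(p+q) x with F^q x and F^p x for two return times shows that for a < 1 it is
   periodic.  Two e-close periodic points x, x' then satisfy
   x' - x = a^(qq') (x' - x), so x' = x: Λ is e-separated in [0,1]^d, hence
   finite.  For a = 1, F is the identity, every point is a limit point, and the
   hypothesis can only hold when d = 0. *)

Set Implicit Arguments.
Unset Strict Implicit.
Unset Printing Implicit Defensive.

Import Order.TTheory GRing.Theory Num.Theory.
Import numFieldNormedType.Exports.
Local Open Scope classical_set_scope.
Local Open Scope ring_scope.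

Lemma heavM_stable {R : realType} (c p q : R) :
  `|q - p| < `|p| -> heav (c * q) = heav (c * p).
Proof.
move=> close; have [pos neg] : ((0 < q) = (0 < p)) /\ ((q < 0) = (p < 0)).
  move: close; rewrite ltr_norml; have [p0|p0|->] := ltrgtP p 0.
  - by rewrite ltr0_norm // => /andP[? ?]; split; apply/idP/idP; lra.
  - by rewrite gtr0_norm // => /andP[? ?]; split; apply/idP/idP; lra.
  - by rewrite normr0 => /andP[? ?]; lra.
rewrite /heav; have [c0|c0|->] := ltrgtP c 0; last by rewrite !mul0r.
- by rewrite !nmulr_rgt0 // neg.
- by rewrite !pmulr_rgt0 // pos.
Qed.

Section RegulatoryNetwork.
Variables (R : realType) (d : nat) (a : R).
Variables (K : 'I_d -> 'I_d -> R) (s : 'I_d -> 'I_d -> int) (T : 'I_d -> 'I_d -> R).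

Local Notation F := (regnet a K s T).

Lemma regnet_cube :
  (forall i j, 0 <= K i j) -> (forall j, \sum_(i < d) K i j = 1) -> 0 <= a <= 1 ->
  forall x, unit_cube x -> unit_cube (F x).
Proof.
move=> K_ge0 K_sum /andP[a0 a1] x x_cube j.
have heav01 i : 0 <= heav ((s i j)%:~R * (x i - T i j)) <= 1.
  by rewrite /heav; case: ifP; rewrite lexx ler01.
have code_ge0 : 0 <= \sum_(i < d) K i j * heav ((s i j)%:~R * (x i - T i j)).
  by apply: sumr_ge0 => i _; have /andP[h0 _] := heav01 i; exact: mulr_ge0.
have code_le1 : \sum_(i < d) K i j * heav ((s i j)%:~R * (x i - T i j)) <= 1.
  rewrite -[leRHS](K_sum j); apply: ler_sum => i _; have /andP[_ h1] := heav01 i.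
  exact: ler_piMr (K_ge0 i j) h1.
have /andP[x0 x1] := x_cube j; rewrite /regnet; apply/andP; split; nra.
Qed.

Lemma regnet_locally_affine (e : R) (x u : 'I_d -> R) :
  (forall i k, e <= `|x i - T i k|) -> (forall i, `|u i - x i| < e) ->
  forall j, F u j - F x j = a * (u j - x j).
Proof.
move=> far close j; rewrite /regnet.
have -> : \sum_(i < d) K i j * heav ((s i j)%:~R * (u i - T i j)) =
          \sum_(i < d) K i j * heav ((s i j)%:~R * (x i - T i j)).
  apply: eq_bigr => i _; rewrite (@heavM_stable _ _ (x i - T i j)) //.
  rewrite opprB addrA subrK; exact: lt_le_trans (close i) (far i j).
ring.
Qed.

Lemma regnet1 : regnet 1 K s T = id.
Proof. by apply/funext => x; apply/funext => j; rewrite /regnet subrr mul0r addr0 mul1r. Qed.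

End RegulatoryNetwork.

Lemma dist_pos_disc_set {R : realType} {d : nat} (A : set ('I_d -> R))
    (T : 'I_d -> 'I_d -> R) :
  (forall i k, 0 <= T i k <= 1) -> A `<=` unit_cube -> dist_pos A (disc_set T) ->
  exists2 e, 0 < e & forall x, A x -> forall i k, e <= `|x i - T i k|.
Proof.
move=> T01 A_cube [e e_gt0 far]; exists e => // x Ax i k.
pose y j := if j == i then T i k else x j.
have y_disc : disc_set T y.
  split; last by exists i, k; rewrite /y eqxx.
  by move=> j; rewrite /y; case: eqP => _; [exact: T01 | exact: A_cube].
have [j] := far x y Ax y_disc; rewrite /y; case: eqP => [-> //|_].
by rewrite subrr normr0 leNgt e_gt0.
Qed.

Lemma cvg_coords_near {R : realType} (I : finType) (z : nat -> I -> R) (x : I -> R) :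
  (forall i, (fun n => z n i) @ \oo --> x i) ->
  forall eta, 0 < eta -> \forall n \near \oo, forall i, `|z n i - x i| < eta.
Proof.
move=> cvg_z eta eta_gt0; apply: filter_forall => i.
by apply: filterS ((cvgrPdist_lt _ _).1 (cvg_z i) eta eta_gt0) => n; rewrite distrC.
Qed.

Lemma ler_norm_iM {R : numDomainType} (b v : R) : 0 <= b <= 1 -> `|b * v| <= `|v|.
Proof. by case/andP=> b0 b1; rewrite normrM (ger0_norm b0) ler_piMl. Qed.

Lemma exprn_itv01 {R : numDomainType} (b : R) n : 0 <= b <= 1 -> 0 <= b ^+ n <= 1.
Proof. by case/andP=> b0 b1; rewrite exprn_ge0 // exprn_ile1. Qed.

Lemma leq_incr_add (t : nat -> nat) : (forall n, t n < t n.+1)%N ->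
  forall n k, (t n + k <= t (n + k))%N.
Proof.
move=> t_incr n; elim=> [|k IH]; first by rewrite !addn0.
by rewrite !addnS (leq_ltn_trans IH (t_incr _)).
Qed.

Lemma exists_exprn_lt {R : realType} (b eta : R) : 0 <= b < 1 -> 0 < eta ->
  exists n, b ^+ n < eta.
Proof.
case/andP=> b0 b1 eta_gt0; have b_norm : `|b| < 1 by rewrite ger0_norm.
have [n _ small] := (cvgrPdist_lt _ _).1 (cvg_expr b_norm) _ eta_gt0.
by exists n; move: (small n (leqnn n)); rewrite /= sub0r normrN ger0_norm ?exprn_ge0.
Qed.

Section LocallyAffineDynamics.
Variables (R : realType) (d : nat) (F : ('I_d -> R) -> 'I_d -> R) (a e : R).
Hypothesis a01 : 0 <= a <= 1.
Hypothesis e_gt0 : 0 < e.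
Hypothesis F_cube : forall x, unit_cube x -> unit_cube (F x).
Hypothesis F_affine : forall x u, limit_set F x -> (forall i, `|u i - x i| < e) ->
  forall j, F u j - F x j = a * (u j - x j).

Lemma limit_set_invariant x : limit_set F x -> limit_set F (F x).
Proof.
move=> Lx; have [x_cube [y [y_cube [t [t_incr cvg_t]]]]] := Lx.
split; first exact: F_cube.
exists y; split => //; exists (fun n => (t n).+1); split => [n|i]; first by rewrite ltnS.
apply/cvgrPdist_lt => eta eta_gt0.
have min_gt0 : 0 < Num.min e eta by rewrite lt_min e_gt0 eta_gt0.
apply: filterS (cvg_coords_near cvg_t min_gt0) => n close.
have close_e j : `|iter (t n) F y j - x j| < e.
  by move: (close j); rewrite lt_min => /andP[].
rewrite /= distrC (F_affine Lx close_e).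
by apply: le_lt_trans (ler_norm_iM _ a01) _; move: (close i); rewrite lt_min => /andP[].
Qed.

Lemma limit_set_iter_invariant x k : limit_set F x -> limit_set F (iter k F x).
Proof. by move=> Lx; elim: k => [//|k IH]; rewrite iterS; apply: limit_set_invariant. Qed.

Lemma limit_set_iter_affine x u : limit_set F x -> (forall i, `|u i - x i| < e) ->
  forall k i, iter k F u i - iter k F x i = a ^+ k * (u i - x i).
Proof.
move=> Lx close; elim=> [|k IH] i; first by rewrite expr0 mul1r.
have close_k j : `|iter k F u j - iter k F x j| < e.
  by rewrite IH; apply: le_lt_trans (close j); exact/ler_norm_iM/exprn_itv01.
rewrite !iterS (F_affine (limit_set_iter_invariant k Lx) close_k) IH.
by rewrite exprS mulrA.
Qed.

Lemma limit_set_recurrent x : limit_set F x -> forall eta, 0 < eta ->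
  forall k0, exists2 p, (k0 <= p)%N & forall i, `|iter p F x i - x i| < eta.
Proof.
move=> Lx eta eta_gt0 k0; have [_ [y [_ [t [t_incr cvg_t]]]]] := Lx.
have min_gt0 : 0 < Num.min e (eta / 2) by rewrite lt_min e_gt0 divr_gt0.
have [n0 _ close] := cvg_coords_near cvg_t min_gt0.
have close_e n j : (n0 <= n)%N -> `|iter (t n) F y j - x j| < e.
  by move=> /close /(_ j); rewrite lt_min => /andP[].
have close_eta n j : (n0 <= n)%N -> `|iter (t n) F y j - x j| < eta / 2.
  by move=> /close /(_ j); rewrite lt_min => /andP[].
have t_gap := leq_incr_add t_incr n0 k0.
exists (t (n0 + k0) - t n0)%N; first by lia.
move=> i; set p := (t (n0 + k0) - t n0)%N; set v := iter (t n0) F y.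
have v_shift : iter p F v = iter (t (n0 + k0)) F y.
  by rewrite /v -iterD subnK //; apply: leq_trans t_gap; exact: leq_addr.
have -> : iter p F x i - x i = (iter p F v i - x i) - a ^+ p * (v i - x i).
  by rewrite -(limit_set_iter_affine Lx (close_e n0 ^~ (leqnn _))); ring.
apply: le_lt_trans (ler_normB _ _) _; rewrite v_shift (splitr eta).
apply: ltr_leD; first exact/close_eta/leq_addr.
apply: le_trans (ler_norm_iM _ (exprn_itv01 p a01)) _.
exact/ltW/close_eta.
Qed.

Hypothesis a_lt1 : a < 1.

Lemma limit_set_periodic x : limit_set F x -> exists2 q, (0 < q)%N & iter q F x = x.
Proof.
move=> Lx; have [q q_gt0 w_close] := limit_set_recurrent Lx e_gt0 1.
exists q => //; apply/funext => i; set w := iter q F x.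
have return_bound p : (forall j, `|iter p F x j - x j| < e) ->
    `|w i - x i| <= a ^+ p * `|w i - x i| + `|iter p F x i - x i|.
  move=> p_close; have shift_p := limit_set_iter_affine Lx w_close p i.
  have shift_q := limit_set_iter_affine Lx p_close q i.
  (* Compare F^(p+q) x with both F^p w and F^q (F^p x). *)
  have decomp : w i - x i = a ^+ p * (w i - x i) + (1 - a ^+ q) * (iter p F x i - x i).
    by rewrite -shift_p mulrBl mul1r -shift_q /w -!iterD addnC; ring.
  rewrite {1}decomp; apply: le_trans (ler_normD _ _) _.
  rewrite normrM ger0_norm ?exprn_ge0 ?lerD2l //; last by case/andP: a01.
  by apply: ler_norm_iM; rewrite subr_ge0 lerBlDr lerDl; case/andP: (exprn_itv01 q a01) => -> ->.
apply/eqP; rewrite -subr_eq0 -normr_le0; apply/ler_addgt0Pr => eta eta_gt0.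
have [k0 ak0_small] : exists k0, a ^+ k0 < 1 / 2.
  by apply: exists_exprn_lt; rewrite ?divr_gt0 // a_lt1 andbT; case/andP: a01.
have min_gt0 : 0 < Num.min e (eta / 2) by rewrite lt_min e_gt0 divr_gt0.
have [p k0_le_p close] := limit_set_recurrent Lx min_gt0 k0.
have close_e j : `|iter p F x j - x j| < e by move: (close j); rewrite lt_min => /andP[].
have close_eta : `|iter p F x i - x i| < eta / 2 by move: (close i); rewrite lt_min => /andP[].
have ap_small : a ^+ p <= a ^+ k0 by apply: ler_wiXn2l => //; case/andP: a01.
have := return_bound p close_e; have := normr_ge0 (w i - x i); rewrite add0r; nra.
Qed.

Lemma limit_set_separated x x' : limit_set F x -> limit_set F x' ->
  (forall i, `|x' i - x i| < e) -> x' = x.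
Proof.
move=> Lx Lx' close.
have [q q_gt0 qx] := limit_set_periodic Lx; have [q' q'_gt0 qx'] := limit_set_periodic Lx'.
apply/funext => i; have := limit_set_iter_affine Lx close (q * q') i.
rewrite iterM (iter_fix _ qx') mulnC iterM (iter_fix _ qx) => fixed.
have aqq_lt1 : a ^+ (q' * q) < 1.
  have [a0 _] := andP a01.
  by rewrite exprn_ilt1 // -lt0n muln_gt0 q_gt0 q'_gt0.
have /eqP : (1 - a ^+ (q' * q)) * (x' i - x i) = 0 by rewrite mulrBl mul1r -fixed subrr.
rewrite mulf_eq0 !subr_eq0 => /orP[/eqP a_eq|/eqP //].
by rewrite -a_eq ltxx in aqq_lt1.
Qed.

End LocallyAffineDynamics.

Lemma separated_cube_finite {R : realType} {d : nat} (A : set ('I_d -> R)) (e : R) :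
  0 < e -> A `<=` unit_cube ->
  (forall x x', A x -> A x' -> (forall i, `|x' i - x i| < e) -> x' = x) ->
  finite_set A.
Proof.
move=> e_gt0 A_cube sep; pose M := (Num.truncn e^-1).+1.
have mesh : 1 < e * M%:R.
  have e_inv_ge0 : 0 <= e^-1 by rewrite invr_ge0 ltW.
  have /andP[_ M_gt] := truncn_itv e_inv_ge0.
  by rewrite -[ltLHS](mulfV (lt0r_neq0 e_gt0)) ltr_pM2l.
pose cell (x : 'I_d -> R) i := Num.truncn (x i * M%:R).
have cell_itv x i : A x -> (cell x i)%:R <= x i * M%:R < (cell x i).+1%:R.
  by move=> Ax; apply: truncn_itv; case/andP: (A_cube x Ax i) => x0 _; rewrite mulr_ge0.
have cell_lt x i : A x -> (cell x i < M.+1)%N.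
  move=> Ax; have /andP[lo _] := cell_itv x i Ax; have /andP[_ x1] := A_cube x Ax i.
  by rewrite ltnS -(ler_nat R); apply: le_trans lo _; rewrite ler_piMl.
pose g x := [ffun i => inord (cell x i) : 'I_M.+1].
have g_inj : {in A &, injective g}.
  move=> x x'; rewrite !in_setE => Ax Ax' /ffunP gxx'; apply: sep => // i.
  move/(congr1 val): (gxx' i); rewrite !ffunE /= !inordK ?cell_lt // => same_cell.
  have := cell_itv x i Ax; have := cell_itv x' i Ax'; rewrite same_cell -natr1.
  have M_gt0 : (0 : R) < M%:R by rewrite ltr0n.
  by rewrite ltr_norml; move=> /andP[? ?] /andP[? ?]; apply/andP; split; nra.
by rewrite -(eq_finite_set (inj_card_eq g_inj)); exact: finite_finset.
Qed.

Lemma fixed_point_limit_set {R : realType} {d : nat} (F : ('I_d -> R) -> 'I_d -> R)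
    (x : 'I_d -> R) :
  unit_cube x -> F x = x -> limit_set F x.
Proof.
move=> x_cube Fx; split => //; exists x; split => //; exists id; split => // i.
have -> : (fun n => iter n F x i) = fun=> x i by apply/funext => n; rewrite iter_fix.
exact: cvg_cst.
Qed.

Theorem mainTheorem4 (R : realType) (d : nat) (a : R)
  (K : 'I_d -> 'I_d -> R) (s : 'I_d -> 'I_d -> int) (T : 'I_d -> 'I_d -> R)
  (hK01 : forall i j, 0 <= K i j <= 1)
  (hKsum : forall j, \sum_(i < d) K i j = 1)
  (hs : forall i j, s i j = 0 \/ s i j = 1 \/ s i j = -1)
  (hsK : forall i j, s i j = 0 <-> K i j = 0)
  (hT01 : forall i j, 0 <= T i j <= 1)
  (hTK : forall i j, T i j = 0 <-> K i j = 0)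
  (ha : 0 <= a <= 1) :
  dist_pos (limit_set (regnet a K s T)) (disc_set T) ->
  finite_set (limit_set (regnet a K s T)).
Proof.
move=> dist_L_disc.
have L_cube : limit_set (regnet a K s T) `<=` unit_cube by move=> x [].
have [e e_gt0 far] := dist_pos_disc_set hT01 L_cube dist_L_disc.
apply: (separated_cube_finite e_gt0 L_cube) => x x' Lx Lx' close.
have [a1|a_neq1] := eqVneq a 1.
  apply/funext => i; exfalso.
  have Lz : limit_set (regnet a K s T) (fun=> T i i).
    by apply: fixed_point_limit_set => [j|]; [exact: hT01 | rewrite a1 regnet1].
  by move: (far _ Lz i i); rewrite subrr normr0 leNgt e_gt0.
have a_lt1 : a < 1 by rewrite lt_neqAle a_neq1; case/andP: ha.
have K_ge0 i j : 0 <= K i j by case/andP: (hK01 i j).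
apply: (limit_set_separated ha e_gt0 _ _ a_lt1 Lx Lx' close).
  by move=> y; apply: regnet_cube.
by move=> y u Ly; apply: regnet_locally_affine; exact: far.
Qed.
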